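(* Let $n\ge1$, $X=\{1,\dots,n\}$, $\mathcal{A}$ the algebra of all functions $X\to\mathbb{R}$ with pointwise operations, $\sigma:X\to X$ a bijection and $\tilde{\sigma}(f)=f\circ\sigma^{-1}$. The center of the skew power series ring $\mathcal{A}[[x;\tilde{\sigma}]]$ is $$Z(\mathcal{A}[[x;\tilde{\sigma}]])=\Big\{\sum_{n=0}^{\infty} f_nx^n : f_n\in\mathcal{A},\ f_n=0\text{ on } Sep^n(X)\text{ and }\tilde{\sigma}(f_n)=f_n\text{ for all } n\ge0\Big\}.$$
   Context: The skew power series ring $\mathcal{A}[[x;\tilde{\sigma}]]$ is the set of formal series $\sum_{n=0}^\infty f_nx^n$, $f_n\in\mathcal{A}$, with coefficientwise addition and multiplication $\big(\sum_n f_nx^n\big)\big(\sum_n g_nx^n\big)=\sum_{n}\big(\sum_{k=0}^n f_k\,\tilde{\sigma}^k(g_{n-k})\big)x^n$ (so $xf=\tilde{\sigma}(f)x$). For an integer $n$, $Sep^n(X)=\{p\in X:\sigma^n(p)\neq p\}$ (so $Sep^0(X)=\emptyset$). *)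

From HB Require Import structures.
From mathcomp Require Import all_boot all_order all_algebra all_fingroup.
From mathcomp Require Import reals.
Set Implicit Arguments. Unset Strict Implicit. Unset Printing Implicit Defensive.
Import GRing.Theory.
Local Open Scope ring_scope.

Definition tsig (R : realType) (n : nat) (sigma : {perm 'I_n})
  (f : 'I_n -> R) : 'I_n -> R := fun p => f ((sigma^-1)%g p).

Definition skewps (R : realType) (n : nat) := nat -> 'I_n -> R.

(* (sum f_k x^k)(sum g_k x^k) = sum_m (sum_{k<=m} f_k tsig^k(g_{m-k})) x^m *)
Definition skew_mul (R : realType) (n : nat) (sigma : {perm 'I_n})
  (f g : skewps R n) : skewps R n :=
  fun m p => \sum_(k < m.+1) f k p * (iter k (tsig sigma) (g (m - k)%N)) p.

Definition in_center (R : realType) (n : nat) (sigma : {perm 'I_n})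
  (f : skewps R n) : Prop :=
  forall g : skewps R n, skew_mul sigma f g = skew_mul sigma g f.

Definition Sep (n : nat) (sigma : {perm 'I_n}) (m : nat) : pred 'I_n :=
  fun p => (sigma ^+ m)%g p != p.

(* A series f is central iff it commutes with every monomial h x^j.  Against
   the constants (j = 0) this says f_m p * h((sigma^m)^-1 p) = h p * f_m p for
   all h, i.e. f_m vanishes wherever sigma^m moves p; against x (j = 1, h = 1)
   it says tsig (f_m) = f_m.  Conversely, under these two conditions the twist
   in both products f g and g f disappears, so both equal the commutative
   Cauchy product of the coefficient sequences. *)

From HB Require Import structures.
From mathcomp Require Import all_boot all_order all_algebra all_fingroup.
From mathcomp Require Import reals.
From Stdlib Require Import FunctionalExtensionality.
Local Open Scope ring_scope.
Import GRing.Theory.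

Section SkewPowerSeries.

Variables (R : realType) (n : nat) (sigma : {perm 'I_n}).

Lemma iter_tsigE k (h : 'I_n -> R) p :
  iter k (tsig sigma) h p = h (((sigma ^+ k)^-1)%g p).
Proof.
elim: k p => [|k IHk] p /=; first by rewrite expg0 invg1 perm1.
by rewrite /tsig IHk expgSr invMg permM.
Qed.

Lemma iter_tsig_fixed k (h : 'I_n -> R) :
  tsig sigma h = h -> iter k (tsig sigma) h = h.
Proof. by move=> fix_h; elim: k => //= k ->. Qed.

Definition skew_monomial (j : nat) (h : 'I_n -> R) : skewps R n :=
  fun i => if i == j then h else fun _ => 0.

Lemma skew_mul_monomialr (f : skewps R n) j h k p :
  skew_mul sigma f (skew_monomial j h) (k + j)%N p
  = f k p * h (((sigma ^+ k)^-1)%g p).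
Proof.
have lt_k : (k < (k + j).+1)%N by rewrite ltnS leq_addr.
rewrite /skew_mul (bigD1 (Ordinal lt_k)) //= big1 ?addr0.
  by rewrite iter_tsigE /skew_monomial addKn eqxx.
move=> i /eqP ne_ik; rewrite iter_tsigE /skew_monomial.
case: eqP => [eq_j|]; last by rewrite mulr0.
case: ne_ik; apply: val_inj => /=.
by have := subnK (ltnSE (ltn_ord i)); rewrite eq_j addnC => /addIn.
Qed.

Lemma skew_mul_monomiall (f : skewps R n) j h k p :
  skew_mul sigma (skew_monomial j h) f (k + j)%N p
  = h p * f k (((sigma ^+ j)^-1)%g p).
Proof.
have lt_j : (j < (k + j).+1)%N by rewrite ltnS leq_addl.
rewrite /skew_mul (bigD1 (Ordinal lt_j)) //= big1 ?addr0.
  by rewrite iter_tsigE /skew_monomial addnK eqxx.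
move=> i /eqP ne_ij; rewrite /skew_monomial.
case: eqP => [eq_j|]; last by rewrite mul0r.
by case: ne_ij; apply: val_inj.
Qed.

Lemma center_coef_Sep (f : skewps R n) m p :
  in_center sigma f -> p \in Sep sigma m -> f m p = 0.
Proof.
move=> central_f; rewrite unfold_in /Sep => moved_p.
pose q := ((sigma ^+ m)^-1)%g p.
have := congr1 (fun F => F (m + 0)%N p)
  (central_f (skew_monomial 0 (fun r => if r == q then 1 else 0))).
rewrite /= skew_mul_monomialr skew_mul_monomiall eqxx mulr1.
case: eqP => [eq_pq|_ ->]; last by rewrite mul0r.
by move: moved_p; rewrite {1}eq_pq permKV eqxx.
Qed.

Lemma center_coef_tsig (f : skewps R n) m :
  in_center sigma f -> tsig sigma (f m) = f m.
Proof.
move=> central_f; apply: functional_extensionality => p.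
have := congr1 (fun F => F (m + 1)%N p)
  (central_f (skew_monomial 1 (fun _ => 1))).
by rewrite /= skew_mul_monomialr skew_mul_monomiall mulr1 mul1r expg1 => ->.
Qed.

Lemma skew_mul_Sep0l (f g : skewps R n) m p :
  (forall k q, q \in Sep sigma k -> f k q = 0) ->
  skew_mul sigma f g m p = \sum_(i < m.+1) f i p * g (m - i)%N p.
Proof.
move=> f_Sep0; apply: eq_bigr => i _; rewrite iter_tsigE.
have [->|nz_fip] := eqVneq (f i p) 0; first by rewrite !mul0r.
have fixed_p : (sigma ^+ i)%g p = p.
  apply/eqP; apply: contraNT nz_fip => moved_p.
  by apply/eqP/f_Sep0; rewrite unfold_in.
have fixed_inv : ((sigma ^+ i)^-1)%g p = p by rewrite -{1}fixed_p permK.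
by rewrite fixed_inv.
Qed.

Lemma skew_mul_tsig_fixedr (f g : skewps R n) m p :
  (forall k, tsig sigma (f k) = f k) ->
  skew_mul sigma g f m p = \sum_(i < m.+1) g i p * f (m - i)%N p.
Proof. by move=> f_fixed; apply: eq_bigr => i _; rewrite iter_tsig_fixed. Qed.

End SkewPowerSeries.

Lemma sum_convolutionC (R : comPzSemiRingType) (a b : nat -> R) m :
  \sum_(i < m.+1) a i * b (m - i)%N = \sum_(i < m.+1) b i * a (m - i)%N.
Proof.
rewrite (reindex_inj rev_ord_inj); apply: eq_bigr => i _ /=.
by rewrite subSS subKn 1?mulrC // -ltnS.
Qed.

Theorem theorem11 (R : realType) (n : nat) (hn : (1 <= n)%N)
  (sigma : {perm 'I_n}) (f : skewps R n) :
  in_center sigma f <->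
  (forall m : nat,
     (forall p : 'I_n, p \in Sep sigma m -> f m p = 0) /\
     tsig sigma (f m) = f m).
Proof.
split=> [central_f m | coef_f g].
  by split=> [p|]; [exact: center_coef_Sep | exact: center_coef_tsig].
apply: functional_extensionality => m; apply: functional_extensionality => p.
rewrite skew_mul_Sep0l => [|k q]; last exact: (proj1 (coef_f k)).
rewrite skew_mul_tsig_fixedr => [|k]; last exact: (proj2 (coef_f k)).
exact: (sum_convolutionC _ (f^~ p) (g^~ p)).
Qed.
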